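(* Let $V$ be a finite set with positive element weights ($\vert A \vert$ = total weight of $A \subseteq V$), let $\mathcal{P}, \mathcal{P}'$ be partitions of $V$ into nonempty parts, and let $P_i', P_j' \in \mathcal{P}'$ be distinct. Define $\phi^*_{i',j'} : 2^{\mathcal{P}} \to \mathbb{R}$ by $$\phi^*_{i',j'}(\mathcal{S}) := \vert U_{\mathcal{S}} \cap P_j' \vert + \vert P_i' \vert - \vert U_{\mathcal{S}} \cap P_i' \vert + \sum_{P' \in \mathcal{P}' \setminus \{P_i', P_j'\}} \vert P' \vert \operatorname{peak}\Big(\frac{\vert U_{\mathcal{S}} \cap P' \vert}{\vert P' \vert}\Big).$$ Then $\phi^*_{i',j'}$ is submodular, and it is not symmetric in general: there exist $V$, $\mathcal{P}$, $\mathcal{P}'$, $P_i'$, $P_j'$ and $\mathcal{S} \subseteq \mathcal{P}$ with $\phi^*_{i',j'}(\mathcal{S}) \ne \phi^*_{i',j'}(\mathcal{P} \setminus \mathcal{S})$.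
   Context: $U_{\mathcal{S}}$ denotes the union of the sets in $\mathcal{S}$; $\operatorname{peak}(x) = x$ for $x \le 1/2$ and $1-x$ for $x > 1/2$. A function $\Pi : 2^{\mathcal{P}} \to \mathbb{R}$ is submodular if $\Pi(\mathcal{S}_1 \cup \mathcal{S}_2) \le \Pi(\mathcal{S}_1) + \Pi(\mathcal{S}_2) - \Pi(\mathcal{S}_1 \cap \mathcal{S}_2)$ for all $\mathcal{S}_1, \mathcal{S}_2$, and symmetric if $\Pi(\mathcal{S}) = \Pi(\mathcal{P} \setminus \mathcal{S})$ for all $\mathcal{S}$. *)

From HB Require Import structures.
From mathcomp Require Import all_boot all_order all_algebra.
Set Implicit Arguments. Unset Strict Implicit. Unset Printing Implicit Defensive.
Import Order.TTheory GRing.Theory Num.Theory.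
Local Open Scope ring_scope.

Definition wt (R : realFieldType) (V : finType) (w : V -> R) (A : {set V}) : R :=
  \sum_(x in A) w x.

Definition peak (R : realFieldType) (x : R) : R :=
  if x <= 2^-1 then x else 1 - x.

Definition phi_star (R : realFieldType) (V : finType) (w : V -> R)
    (P' : {set {set V}}) (Pi Pj : {set V}) (S : {set {set V}}) : R :=
  wt w (cover S :&: Pj) + wt w Pi - wt w (cover S :&: Pi)
  + \sum_(Q in P' :\: [set Pi; Pj])
      wt w Q * peak (wt w (cover S :&: Q) / wt w Q).

Definition submodular_on (R : realFieldType) (V : finType) (P : {set {set V}})
    (Pi_fun : {set {set V}} -> R) : Prop :=
  forall S1 S2 : {set {set V}}, S1 \subset P -> S2 \subset P ->
    Pi_fun (S1 :|: S2) <= Pi_fun S1 + Pi_fun S2 - Pi_fun (S1 :&: S2).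

Definition symmetric_on (R : realFieldType) (V : finType) (P : {set {set V}})
    (Pi_fun : {set {set V}} -> R) : Prop :=
  forall S : {set {set V}}, S \subset P -> Pi_fun S = Pi_fun (P :\: S).

(* Write X := U_S.  Since the parts in P are pairwise disjoint, S |-> U_S turns unions
   and intersections of subfamilies of P into unions and intersections of subsets of V,
   so it suffices that X |-> phi(X) is submodular on subsets of V.  The first three
   terms are modular in X, and each peak term is submodular: with t := |X ∩ Q| the
   values t_{X∪Y}, t_{X∩Y} have the same sum as t_X, t_Y but are further apart, and
   peak is concave.  For the second claim, phi(∅) = |P_i'| while phi(P) = |P_j'|
   (as peak 0 = peak 1 = 0), so phi is not symmetric as soon as |P_i'| <> |P_j'|. *)

From HB Require Import structures.
From mathcomp Require Import all_boot all_order all_algebra.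
From mathcomp Require Import lra.
Set Implicit Arguments. Unset Strict Implicit. Unset Printing Implicit Defensive.
Import Order.TTheory GRing.Theory Num.Theory.
Local Open Scope ring_scope.

Lemma peak0 (R : realFieldType) : peak (0 : R) = 0.
Proof. by rewrite /peak invr_ge0 ler0n. Qed.

Lemma peak1 (R : realFieldType) : peak (1 : R) = 0.
Proof. by rewrite /peak ifF ?subrr // invf_ge1 ?ltr0n // lern1. Qed.

Lemma peak_spread_le (R : realFieldType) (u l a b : R) :
  u + l = a + b -> l <= a -> l <= b -> peak u + peak l <= peak a + peak b.
Proof.
move=> sum_eq la lb; rewrite /peak.
by case: (lerP u 2^-1); case: (lerP l 2^-1);
   case: (lerP a 2^-1); case: (lerP b 2^-1); lra.
Qed.

Section Weight.

Variables (R : realFieldType) (V : finType) (w : V -> R).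

Lemma wt_set0 : wt w set0 = 0.
Proof. exact: big_set0. Qed.

Lemma wt_setID (A B : {set V}) : wt w A = wt w (A :&: B) + wt w (A :\: B).
Proof. exact: big_setID. Qed.

Lemma wt_setUI (A B : {set V}) :
  wt w (A :|: B) + wt w (A :&: B) = wt w A + wt w B.
Proof.
rewrite (wt_setID (A :|: B) A) setUK setDUl setDv set0U (wt_setID B A) setIC.
by rewrite addrAC -addrA.
Qed.

Lemma wt_setI_modular (A X Y : {set V}) :
  wt w ((X :|: Y) :&: A) + wt w ((X :&: Y) :&: A) = wt w (X :&: A) + wt w (Y :&: A).
Proof.
have -> : (X :&: Y) :&: A = (X :&: A) :&: (Y :&: A) by rewrite setIACA setIid.
by rewrite setIUl wt_setUI.
Qed.

Hypothesis w_gt0 : forall x, 0 < w x.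

Lemma wt_ge0 (A : {set V}) : 0 <= wt w A.
Proof. by apply: sumr_ge0 => x _; apply: ltW. Qed.

Lemma wt_gt0 (A : {set V}) : A != set0 -> 0 < wt w A.
Proof.
case/set0Pn => x xA; rewrite /wt (bigD1 x) //= ltr_pwDl //.
by rewrite sumr_ge0 // => y _; apply: ltW.
Qed.

Lemma subset_wt_le (A B : {set V}) : A \subset B -> wt w A <= wt w B.
Proof. by move=> sAB; rewrite (wt_setID B A) (setIidPr sAB) lerDl wt_ge0. Qed.

End Weight.

Section Submodular.

Variables (R : realFieldType) (V : finType).

Definition set_submodular (g : {set V} -> R) : Prop :=
  forall X Y, g (X :|: Y) + g (X :&: Y) <= g X + g Y.

Lemma set_submodularD (g h : {set V} -> R) :
  set_submodular g -> set_submodular h -> set_submodular (fun X => g X + h X).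
Proof. by move=> g_sub h_sub X Y; have := g_sub X Y; have := h_sub X Y; lra. Qed.

Lemma set_submodular_sum (I : Type) (r : seq I) (P : pred I)
    (g : I -> {set V} -> R) :
  (forall i, P i -> set_submodular (g i)) ->
  set_submodular (fun X => \sum_(i <- r | P i) g i X).
Proof.
by move=> g_sub X Y; rewrite -!big_split; apply: ler_sum => i Pi; apply: g_sub.
Qed.

Lemma coverI_trivIset (P S1 S2 : {set {set V}}) :
  trivIset P -> S1 \subset P -> S2 \subset P ->
  cover (S1 :&: S2) = cover S1 :&: cover S2.
Proof.
move=> /trivIsetP trivP /subsetP sS1P /subsetP sS2P; apply/setP => x.
rewrite inE; apply/bigcupP/andP => [[A] | [/bigcupP[A AS1 xA] /bigcupP[B BS2 xB]]].
  by rewrite inE => /andP[AS1 AS2] xA; split; apply/bigcupP; exists A.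
have eqAB : A = B.
  apply: contraTeq xB => neqAB.
  by rewrite (disjointFr (trivP A B (sS1P A AS1) (sS2P B BS2) neqAB) xA).
by exists A; rewrite // inE AS1 eqAB BS2.
Qed.

Lemma submodular_on_cover (P : {set {set V}}) (g : {set V} -> R) :
  trivIset P -> set_submodular g -> submodular_on P (fun S => g (cover S)).
Proof.
move=> trivP g_sub S1 S2 sS1P sS2P.
rewrite /cover bigcup_setU -!/(cover _) (coverI_trivIset trivP) //.
by rewrite lerBrDr; apply: g_sub.
Qed.

End Submodular.

Section PhiStar.

Variables (R : realFieldType) (V : finType) (w : V -> R).
Variables (P' : {set {set V}}) (Pi Pj : {set V}).
Hypothesis w_gt0 : forall x, 0 < w x.

Definition phi_star_of_union (X : {set V}) : R :=
  wt w (X :&: Pj) + wt w Pi - wt w (X :&: Pi)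
  + \sum_(Q in P' :\: [set Pi; Pj]) wt w Q * peak (wt w (X :&: Q) / wt w Q).

Lemma wt_part_gt0 (Q : {set V}) : set0 \notin P' -> Q \in P' -> 0 < wt w Q.
Proof. by move=> P'_neq0 QP'; apply: wt_gt0 => //; apply: contraNneq P'_neq0 => <-. Qed.

Lemma set_submodular_peak (Q : {set V}) :
  0 < wt w Q -> set_submodular (fun X => wt w Q * peak (wt w (X :&: Q) / wt w Q)).
Proof.
move=> Q_gt0 X Y; rewrite -!mulrDr; apply: ler_wpM2l; first exact: ltW.
have le_share Z : (X :&: Y) :&: Q \subset Z :&: Q ->
    wt w ((X :&: Y) :&: Q) / wt w Q <= wt w (Z :&: Q) / wt w Q.
  by move=> sub; rewrite ler_pM2r ?invr_gt0 ?subset_wt_le.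
apply: peak_spread_le.
- by rewrite -!mulrDl wt_setI_modular.
- by apply: le_share; rewrite setSI ?subsetIl.
- by apply: le_share; rewrite setSI ?subsetIr.
Qed.

Lemma set_submodular_phi_star : set0 \notin P' -> set_submodular phi_star_of_union.
Proof.
move=> P'_neq0.
apply: (set_submodularD
          (g := fun X => wt w (X :&: Pj) + wt w Pi - wt w (X :&: Pi))).
  by move=> X Y; have := wt_setI_modular w Pi X Y; have := wt_setI_modular w Pj X Y; lra.
apply: set_submodular_sum => Q /setDP[QP' _].
exact/set_submodular_peak/wt_part_gt0.
Qed.

Lemma phi_star_submodular (P : {set {set V}}) :
  trivIset P -> set0 \notin P' -> submodular_on P (phi_star w P' Pi Pj).
Proof.
by move=> trivP P'_neq0; apply: submodular_on_cover trivP (set_submodular_phi_star _).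
Qed.

Lemma phi_star_set0 : phi_star w P' Pi Pj set0 = wt w Pi.
Proof.
rewrite /phi_star /cover big_set0 !set0I wt_set0.
rewrite big1 => [|Q _]; last by rewrite set0I wt_set0 mul0r peak0 mulr0.
by rewrite add0r subr0 addr0.
Qed.

Lemma phi_star_full (S : {set {set V}}) :
  set0 \notin P' -> cover S = [set: V] -> phi_star w P' Pi Pj S = wt w Pj.
Proof.
move=> P'_neq0 coverS; rewrite /phi_star coverS !setTI.
rewrite big1 => [|Q /setDP[QP' _]]; first by rewrite addrK addr0.
by rewrite setTI divff ?gt_eqF ?wt_part_gt0 // peak1 mulr0.
Qed.

Lemma phi_star_not_symmetric (P : {set {set V}}) :
  partition P [set: V] -> set0 \notin P' -> wt w Pi != wt w Pj ->
  ~ symmetric_on P (phi_star w P' Pi Pj).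
Proof.
move=> partP P'_neq0 neq_wt sym; move: neq_wt; rewrite -phi_star_set0.
rewrite (sym set0 (sub0set P)) setD0 phi_star_full ?eqxx //.
exact: cover_partition.
Qed.

End PhiStar.

Lemma partition_set1 (V : finType) : partition [set [set x] | x : V] [set: V].
Proof.
have -> : [set [set x] | x : V] = preim_partition id [set: V].
  apply/setP => A; apply/imsetP/imsetP => -[x _ ->];
    by exists x => //; apply/setP => y; rewrite !inE eq_sym.
exact: preim_partitionP.
Qed.

Theorem proposition10 (R : realFieldType) :
  (forall (V : finType) (w : V -> R) (P P' : {set {set V}}) (Pi Pj : {set V}),
     (forall x, 0 < w x) ->
     partition P [set: V] -> partition P' [set: V] ->
     Pi \in P' -> Pj \in P' -> Pi != Pj ->
     submodular_on P (phi_star w P' Pi Pj))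
  /\
  (exists (V : finType) (w : V -> R) (P P' : {set {set V}}) (Pi Pj : {set V}),
     (forall x, 0 < w x) /\
     partition P [set: V] /\ partition P' [set: V] /\
     Pi \in P' /\ Pj \in P' /\ Pi != Pj /\
     ~ symmetric_on P (phi_star w P' Pi Pj)).
Proof.
split=> [V w P P' Pi Pj w_gt0 partP partP' _ _ _ | ].
  by apply: phi_star_submodular;
    rewrite ?(partition_trivIset partP) ?(partition0 partP').
pose w (b : bool) : R := if b then 1 else 2.
pose P := [set [set b] | b : bool].
have w_gt0 b : 0 < w b by case: b; rewrite /w ?ltr01 ?ltr0n.
exists bool, w, P, P, [set true], [set false].
do 6?split; rewrite ?partition_set1 ?imset_f //.
- by apply/eqP => /setP /(_ true); rewrite !inE.
apply: phi_star_not_symmetric; rewrite ?partition_set1 ?(partition0 (partition_set1 _)) //.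
by rewrite /wt !big_set1 /w eq_sym pnatr_eq1.
Qed.
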